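(* For every real $\theta>1$, the set $\mathcal A_\theta$ has density $0$, i.e. $\lim_{N\to\infty}\frac{|\mathcal A_\theta\cap[1,N]|}{N}=0$.
   Context: $\lfloor x\rfloor$ is the floor of $x$; $\log$ is the natural logarithm. For real $\theta>1$ and positive integer $n$, $M'_\theta(n)=\left\lfloor 1/(\theta^{1/n}-1)\right\rfloor$, and $\mathcal A_\theta=\{n\in\mathbb N: M'_\theta(n)\neq \lfloor n/\log\theta-1/2\rfloor\}$, where $\mathbb N$ is the set of positive integers. *)

From Stdlib Require Import Reals Lra Lia ZArith.
Open Scope R_scope.

(* floor of a real number: Int_part x = up x - 1 is the floor. *)
Definition floorR (x : R) : Z := Int_part x.

Definition Mprime (theta : R) (n : nat) : Z :=
  floorR (1 / (Rpower theta (1 / INR n) - 1)).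

Definition Mapprox (theta : R) (n : nat) : Z :=
  floorR (INR n / ln theta - 1 / 2).

Definition in_A (theta : R) (n : nat) : Prop :=
  (1 <= n)%nat /\ Mprime theta n <> Mapprox theta n.

Fixpoint countA (theta : R) (N : nat) : nat :=
  match N with
  | O => O
  | S m => (countA theta m +
            if Z.eq_dec (Mprime theta (S m)) (Mapprox theta (S m)) then 0 else 1)%nat
  end.

From Stdlib Require Import Reals Lra Lia ZArith Classical Arith Bool.
From Coquelicot Require Import Coquelicot.

(* With x = ln θ / n, the expansion 1/(e^x - 1) = 1/x - 1/2 + O(x) shows that
   M'_θ(n) ≠ ⌊n/ln θ - 1/2⌋ forces n/ln θ - 1/2 to lie within O(1/n) below an
   integer.  So for every η > 0 and all large n with n + 1 ∈ A_θ, the number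
   (n + 1)β - 1/2 = nβ + c (β = 1/ln θ, c = β - 1/2) lies within η below an
   integer, and it suffices that such n have density at most ε once η is small.
   Either some h ≥ 1 has 0 < ‖hβ‖ < η: then n and n + jh cannot both qualify for
   the long range of j with η ≤ j‖hβ‖ ≤ 1 - η, so along each progression
   n, n + h, n + 2h, ... at most a proportion ≈ η of the terms qualify.  Or no
   such h exists: then two qualifying n would differ by an h with ‖hβ‖ < η, and
   shrinking the window leaves no qualifying n at all. *)

Section Counting.
Local Open Scope nat_scope.

Fixpoint nsum (F : nat -> nat) (N : nat) : nat :=
  match N with O => O | S m => nsum F m + F m end.

Definition count (Q : nat -> bool) (N : nat) : nat := nsum (fun n => Nat.b2n (Q n)) N.

Lemma nsum_le F G N : (forall i, i < N -> F i <= G i) -> nsum F N <= nsum G N.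
Proof.
  induction N as [|N IH]; simpl; intros H; [lia|].
  specialize (IH (fun i Hi => H i ltac:(lia))). specialize (H N ltac:(lia)). lia.
Qed.

Lemma nsum_ext F G N : (forall i, i < N -> F i = G i) -> nsum F N = nsum G N.
Proof.
  intros H. apply Nat.le_antisymm; apply nsum_le; intros i Hi; rewrite H; lia.
Qed.

Lemma nsum_add F G N : nsum (fun i => F i + G i) N = nsum F N + nsum G N.
Proof. induction N; simpl; lia. Qed.

Lemma nsum_const c N : nsum (fun _ => c) N = N * c.
Proof. induction N; simpl; lia. Qed.

Lemma nsum_split F k N : nsum F (k + N) = nsum F k + nsum (fun m => F (k + m)) N.
Proof.
  induction N as [|N IH]; simpl; [rewrite Nat.add_0_r; lia|].
  rewrite Nat.add_succ_r; simpl; lia.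
Qed.

Lemma nsum_succ_l F N : nsum F (S N) = F 0 + nsum (fun j => F (S j)) N.
Proof. induction N; simpl in *; lia. Qed.

Lemma nsum_swap (F : nat -> nat -> nat) N B :
  nsum (fun j => nsum (F j) N) B = nsum (fun m => nsum (fun j => F j m) B) N.
Proof.
  induction B as [|B IH]; simpl.
  - induction N; simpl; lia.
  - rewrite IH, <- nsum_add. reflexivity.
Qed.

Lemma count_le_length Q N : count Q N <= N.
Proof.
  unfold count. rewrite <- (Nat.mul_1_r N) at 2. rewrite <- nsum_const.
  apply nsum_le. intros; apply Nat.b2n_le_1.
Qed.

Lemma count_le_of_vanish Q k N : (forall j, k <= j < N -> Q j = false) -> count Q N <= k.
Proof.
  induction N as [|N IH]; intros H; unfold count in *; simpl; [lia|].
  destruct (le_lt_dec k N).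
  - rewrite H by lia. specialize (IH ltac:(intros; apply H; lia)). simpl. lia.
  - pose proof (count_le_length Q N). unfold count in H0.
    pose proof (Nat.b2n_le_1 (Q N)). lia.
Qed.

Lemma count_le_split Q n1 N : count Q N <= n1 + count (fun n => Q n && (n1 <=? n)) N.
Proof.
  assert (Hbelow : count (fun n => n <? n1) N <= n1).
  { apply count_le_of_vanish. intros j Hj. apply Nat.ltb_ge. lia. }
  enough (count Q N <= count (fun n => Q n && (n1 <=? n)) N + count (fun n => n <? n1) N)
    by lia.
  unfold count. rewrite <- nsum_add. apply nsum_le. intros i _.
  destruct (Q i); simpl; [|lia].
  destruct (Nat.leb_spec n1 i), (Nat.ltb_spec i n1); simpl; lia.
Qed.

Section Gaps.

Variables a b : nat.
Hypothesis a_pos : 1 <= a.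

Lemma count_window (F : nat -> bool) :
  (forall i j, a <= j <= b -> F i = true -> F (i + j) = false) ->
  forall M i, M <= S b -> count (fun j => F (i + j)) M <= a.
Proof.
  intros Hgap M. induction M as [|M IH]; intros i HM; [unfold count; simpl; lia|].
  unfold count. rewrite nsum_succ_l, Nat.add_0_r.
  destruct (F i) eqn:Fi; simpl.
  - enough (count (fun j => F (i + S j)) M <= a - 1) by (unfold count in *; lia).
    apply count_le_of_vanish. intros j Hj. apply (Hgap i (S j)); [lia | exact Fi].
  - rewrite (nsum_ext _ (fun j => Nat.b2n (F (S i + j)))) by (intros; do 2 f_equal; lia).
    apply IH; lia.
Qed.

Lemma count_le_of_gaps (Q : nat -> bool) (h : nat) :
  (forall n j, a <= j <= b -> Q n = true -> Q (n + j * h) = false) ->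
  forall N, S b * count Q N <= N * a + S b * (b * h).
Proof.
  intros Hgap N.
  (* average the count over the shifts 0, h, ..., b h *)
  assert (Hshift : forall j, j <= b ->
            count Q N <= j * h + count (fun m => Q (m + j * h)) N).
  { intros j Hj.
    apply Nat.le_trans with (count Q (j * h + N)).
    - rewrite Nat.add_comm. unfold count. rewrite nsum_split. lia.
    - unfold count. rewrite nsum_split.
      pose proof (count_le_length Q (j * h)). unfold count in H.
      rewrite (nsum_ext (fun m => Nat.b2n (Q (j * h + m))) (fun m => Nat.b2n (Q (m + j * h))))
        by (intros; do 2 f_equal; lia).
      lia. }
  assert (Hwindows : nsum (fun j => count (fun m => Q (m + j * h)) N) (S b) <= N * a).
  { unfold count. rewrite (nsum_swap (fun j m => Nat.b2n (Q (m + j * h)))).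
    rewrite <- (nsum_const a N). apply nsum_le. intros m _.
    assert (Hgap_m : forall i j, a <= j <= b -> Q (m + i * h) = true ->
                                 Q (m + (i + j) * h) = false).
    { intros i j Hj Hi. replace (m + (i + j) * h) with (m + i * h + j * h) by lia.
      apply Hgap; assumption. }
    exact (count_window (fun j => Q (m + j * h)) Hgap_m (S b) 0 (le_n _)). }
  assert (Hoffsets : nsum (fun j => j * h) (S b) <= S b * (b * h)).
  { rewrite <- (nsum_const (b * h) (S b)). apply nsum_le. intros; nia. }
  rewrite <- (nsum_const (count Q N) (S b)).
  apply Nat.le_trans with (nsum (fun j => j * h + count (fun m => Q (m + j * h)) N) (S b)).
  - apply nsum_le. intros j Hj. apply Hshift. lia.
  - rewrite nsum_add. lia.
Qed.

End Gaps.
End Counting.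
Open Scope R_scope.

Lemma exp_pade_le (y : R) : 0 <= y -> (2 - y) * exp y <= 2 + y.
Proof.
  intros Hy.
  set (phi := fun t => (2 + t) - (2 - t) * exp t).
  assert (Hd : forall t, is_derive phi t (1 - (1 - t) * exp t)).
  { intros t. unfold phi. auto_derive; [auto | ring]. }
  destruct (MVT_gen phi 0 y (fun t => 1 - (1 - t) * exp t)) as [c [_ Heq]].
  - intros; apply Hd.
  - intros t _. apply continuity_pt_filterlim.
    apply (ex_derive_continuous (V := R_NormedModule) phi). eexists; apply Hd.
  - (* phi' c >= 0 is [exp (-c) >= 1 - c] *)
    assert (Hc : 0 <= 1 - (1 - c) * exp c).
    { pose proof (exp_ineq1_le (- c)). pose proof (exp_pos c).
      assert (exp (- c) * exp c = 1) by (rewrite <- exp_plus, Rplus_opp_l; apply exp_0).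
      nra. }
    unfold phi in Heq. rewrite exp_0 in Heq. nra.
Qed.

Lemma inv_exp_sub1_bounds (x : R) : 0 < x ->
  1 / x - 1 / 2 <= 1 / (exp x - 1) <= 1 / x - 1 / 2 + x / 4.
Proof.
  intros Hx.
  assert (Htaylor : x + x * x / 2 <= exp x - 1).
  { pose proof (exp_ge_taylor x 2 (Rlt_le _ _ Hx)) as Ht. simpl in Ht. lra. }
  assert (Hpos : 0 < exp x - 1) by nra.
  pose proof (exp_pade_le x (Rlt_le _ _ Hx)).
  split.
  - apply (Rmult_le_reg_r ((exp x - 1) * (2 * x))); [nra|].
    replace (1 / (exp x - 1) * ((exp x - 1) * (2 * x))) with (2 * x) by (field; lra).
    replace ((1 / x - 1 / 2) * ((exp x - 1) * (2 * x))) with ((2 - x) * (exp x - 1))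
      by (field; lra).
    lra.
  - assert (Hb : 0 <= 1 / x - 1 / 2 + x / 4).
    { replace (1 / x - 1 / 2 + x / 4) with (((x - 1) * (x - 1) + 3) / (4 * x))
        by (field; lra).
      apply Rle_mult_inv_pos; nra. }
    apply (Rmult_le_reg_r (exp x - 1)); [exact Hpos|].
    replace (1 / (exp x - 1) * (exp x - 1)) with 1 by (field; lra).
    apply Rle_trans with ((1 / x - 1 / 2 + x / 4) * (x + x * x / 2)).
    + replace ((1 / x - 1 / 2 + x / 4) * (x + x * x / 2)) with (1 + x * x * x / 8)
        by (field; lra).
      nra.
    + apply Rmult_le_compat_l; assumption.
Qed.

Lemma nat_floor (y : R) : 0 <= y -> exists k : nat, INR k <= y < INR k + 1.
Proof.
  intros Hy. destruct (base_Int_part y) as [H1 H2].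
  assert (Hnn : (0 <= Int_part y)%Z).
  { assert (IZR (-1) < IZR (Int_part y)) by lra. apply lt_IZR in H. lia. }
  exists (Z.to_nat (Int_part y)).
  rewrite INR_IZR_INZ, Z2Nat.id by exact Hnn. lra.
Qed.

Lemma floorR_le (x y : R) : x <= y -> (floorR x <= floorR y)%Z.
Proof.
  intros H. unfold floorR.
  destruct (base_Int_part x), (base_Int_part y).
  assert (IZR (Int_part x) < IZR (Int_part y + 1)) by (rewrite plus_IZR; lra).
  apply lt_IZR in H4. lia.
Qed.

Lemma floorR_lt_of_ne (x y : R) : x <= y -> floorR x <> floorR y -> x < IZR (floorR y) <= y.
Proof.
  intros Hxy Hne. pose proof (floorR_le x y Hxy).
  assert (Hlt : (floorR x + 1 <= floorR y)%Z) by lia.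
  apply IZR_le in Hlt. rewrite plus_IZR in Hlt.
  unfold floorR in *. destruct (base_Int_part x), (base_Int_part y). lra.
Qed.

Definition below_integer (beta c eta : R) (n : nat) : Prop :=
  exists k : Z, INR n * beta + c < IZR k < INR n * beta + c + eta.

Lemma IZR_abs_lt_1 (z : Z) : Rabs (IZR z) < 1 -> z = 0%Z.
Proof.
  intros H. apply Rabs_def2 in H. destruct H as [H1 H2].
  change (IZR z < IZR 1) in H1. change (IZR (-1) < IZR z) in H2.
  apply lt_IZR in H1. apply lt_IZR in H2. lia.
Qed.

Lemma below_integer_shift_excl beta c eta h m j n :
  eta <= INR j * Rabs (INR h * beta - IZR m) <= 1 - eta ->
  below_integer beta c eta n -> ~ below_integer beta c eta (n + j * h).
Proof.
  intros Hj [k Hk] [k' Hk'].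
  set (T := INR j * (INR h * beta - IZR m)).
  assert (HT : eta <= Rabs T <= 1 - eta).
  { unfold T. rewrite Rabs_mult, (Rabs_right (INR j)) by (apply Rle_ge, pos_INR).
    exact Hj. }
  set (z := (k' - k - Z.of_nat j * m)%Z).
  assert (Hz : IZR z = IZR k' - IZR k - INR j * IZR m).
  { unfold z. rewrite !minus_IZR, mult_IZR, <- INR_IZR_INZ. ring. }
  rewrite plus_INR, mult_INR in Hk'.
  assert (Hdist : Rabs (IZR z - T) < eta) by (apply Rabs_def1; unfold T; lra).
  assert (Hz0 : z = 0%Z).
  { apply IZR_abs_lt_1.
    replace (IZR z) with (IZR z - T + T) by ring.
    pose proof (Rabs_triang (IZR z - T) T). lra. }
  rewrite Hz0, Rminus_0_l, Rabs_Ropp in Hdist. lra.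
Qed.

Lemma below_integer_empty_of_no_small_multiple beta c eta : 0 < eta <= 1 ->
  (forall h m, (1 <= h)%nat -> ~ 0 < Rabs (INR h * beta - IZR m) < eta) ->
  exists eta', 0 < eta' /\ forall n, ~ below_integer beta c eta' n.
Proof.
  intros Heta Hno.
  destruct (classic (exists n0, below_integer beta c eta n0)) as [[n0 [k0 Hk0]]|Hempty].
  2: { exists eta; split; [lra|]. intros n Hn. apply Hempty; eauto. }
  (* shrink the window so that it closes exactly at the integer k0 *)
  exists (IZR k0 - (INR n0 * beta + c)). split; [lra|].
  intros n [k Hk].
  destruct (lt_eq_lt_dec n n0) as [[Hlt|Heq]|Hgt].
  - apply (Hno (n0 - n)%nat (k0 - k)%Z); [lia|].
    rewrite minus_INR, minus_IZR by lia.
    replace ((INR n0 - INR n) * beta - (IZR k0 - IZR k))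
      with ((IZR k - (INR n * beta + c)) - (IZR k0 - (INR n0 * beta + c))) by ring.
    rewrite Rabs_left by lra. lra.
  - subst n. assert (Hkk : (k0 - k = 0)%Z).
    { apply IZR_abs_lt_1. rewrite minus_IZR. apply Rabs_def1; lra. }
    apply (f_equal IZR) in Hkk. rewrite minus_IZR in Hkk. simpl in Hkk. lra.
  - apply (Hno (n - n0)%nat (k - k0)%Z); [lia|].
    rewrite minus_INR, minus_IZR by lia.
    replace ((INR n - INR n0) * beta - (IZR k - IZR k0))
      with ((IZR k0 - (INR n0 * beta + c)) - (IZR k - (INR n * beta + c))) by ring.
    rewrite Rabs_right by lra. lra.
Qed.

Lemma count_below_integer_of_small_multiple beta c eps h m :
  0 < eps <= 1 -> (1 <= h)%nat -> 0 < Rabs (INR h * beta - IZR m) < eps / 4 ->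
  exists C : nat, forall Q : nat -> bool,
    (forall n, Q n = true -> below_integer beta c (eps / 4) n) ->
    forall N, INR (count Q N) <= eps * INR N + INR C.
Proof.
  intros Heps Hh Hr.
  set (eta := eps / 4) in *.
  assert (Heta : 0 < eta <= 1 / 4) by (unfold eta; lra).
  set (r := Rabs (INR h * beta - IZR m)) in *.
  (* a is the least and b the greatest j with eta <= j r <= 1 - eta *)
  destruct (nat_floor (eta / r)) as [a' Ha'].
  { apply Rlt_le, Rdiv_lt_0_compat; lra. }
  destruct (nat_floor ((1 - eta) / r)) as [b Hb].
  { apply Rlt_le, Rdiv_lt_0_compat; lra. }
  set (a := S a').
  assert (Har : eta < INR a * r <= eta + r).
  { unfold a. rewrite S_INR.
    destruct Ha' as [H1 H2].
    apply (Rmult_le_compat_r r) in H1; [|lra].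
    apply (Rmult_lt_compat_r r) in H2; [|lra].
    replace (eta / r * r) with eta in * by (field; lra). nra. }
  assert (Hbr : INR b * r <= 1 - eta < INR (S b) * r).
  { rewrite S_INR. destruct Hb as [H1 H2].
    apply (Rmult_le_compat_r r) in H1; [|lra].
    apply (Rmult_lt_compat_r r) in H2; [|lra].
    replace ((1 - eta) / r * r) with (1 - eta) in * by (field; lra). lra. }
  assert (Hab : INR a <= eps * INR (S b)).
  { apply (Rmult_le_reg_r r); [lra|].
    assert (eps * (3 / 4) <= eps * (INR (S b) * r)) by (apply Rmult_le_compat_l; lra).
    unfold eta in *. lra. }
  exists (b * h)%nat. intros Q HQ N.
  assert (Hgap : forall n j, (a <= j <= b)%nat -> Q n = true -> Q (n + j * h)%nat = false).
  { intros n j Hj Hn. apply not_true_is_false. intros Hnj.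
    apply (below_integer_shift_excl beta c eta h m j n); auto.
    fold r. split.
    - apply Rle_trans with (INR a * r); [lra|].
      apply Rmult_le_compat_r; [apply Rabs_pos | apply le_INR; lia].
    - apply Rle_trans with (INR b * r); [|lra].
      apply Rmult_le_compat_r; [apply Rabs_pos | apply le_INR; lia]. }
  pose proof (count_le_of_gaps a b ltac:(unfold a; lia) Q h Hgap N) as Hcount.
  apply le_INR in Hcount. rewrite !mult_INR, plus_INR, !mult_INR in Hcount.
  rewrite mult_INR.
  assert (HSb : 0 < INR (S b)) by (apply lt_0_INR; lia).
  pose proof (pos_INR N).
  apply (Rmult_le_reg_l (INR (S b))); [exact HSb|]. nra.
Qed.

Lemma count_below_integer beta c eps : 0 < eps <= 1 ->
  exists eta, 0 < eta /\ exists C : nat, forall Q : nat -> bool,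
    (forall n, Q n = true -> below_integer beta c eta n) ->
    forall N, INR (count Q N) <= eps * INR N + INR C.
Proof.
  intros Heps.
  destruct (classic (exists h m, (1 <= h)%nat /\ 0 < Rabs (INR h * beta - IZR m) < eps / 4))
    as [[h [m [Hh Hr]]] | Hno].
  - exists (eps / 4). split; [lra|].
    exact (count_below_integer_of_small_multiple beta c eps h m Heps Hh Hr).
  - destruct (below_integer_empty_of_no_small_multiple beta c (eps / 4)) as [eta [Heta Hempty]].
    { lra. }
    { intros h m Hh Hr. apply Hno. eauto. }
    exists eta. split; [exact Heta|]. exists 0%nat. intros Q HQ N.
    assert (Hzero : count Q N = 0%nat).
    { apply Nat.le_0_r, count_le_of_vanish. intros j _.
      apply not_true_is_false. intros Hj. exact (Hempty j (HQ j Hj)). }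
    rewrite Hzero. simpl. pose proof (pos_INR N). nra.
Qed.

Lemma Mprime_ne_Mapprox_below_integer theta eta : 1 < theta -> 0 < eta ->
  exists n1 : nat, forall n, (n1 <= n)%nat -> Mprime theta (S n) <> Mapprox theta (S n) ->
    below_integer (1 / ln theta) (1 / ln theta - 1 / 2) eta n.
Proof.
  intros Htheta Heta.
  assert (HL : 0 < ln theta) by (rewrite <- ln_1; apply ln_increasing; lra).
  set (L := ln theta) in *.
  assert (Hpos : 0 < L / (4 * eta)) by (apply Rdiv_lt_0_compat; lra).
  destruct (nat_floor (L / (4 * eta))) as [n1 Hn1]; [lra|].
  exists n1. intros n Hn Hne.
  set (N' := INR (S n)).
  assert (HN' : L / (4 * eta) < N').
  { unfold N'. rewrite S_INR. apply le_INR in Hn. lra. }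
  (* M'_theta(S n) = floor (1 / (exp x - 1)) with x = L / N' *)
  assert (HN0 : 0 < N') by lra.
  set (x := 1 / N' * L).
  assert (Hx : 0 < x) by (unfold x; apply Rmult_lt_0_compat; [apply Rdiv_lt_0_compat|]; lra).
  assert (Hx4 : x / 4 < eta).
  { apply (Rmult_lt_compat_r (4 * eta)) in HN'; [|lra].
    replace (L / (4 * eta) * (4 * eta)) with L in HN' by (field; lra).
    apply (Rmult_lt_reg_r (4 * N')); [lra|].
    replace (x / 4 * (4 * N')) with L by (unfold x; field; lra). lra. }
  destruct (inv_exp_sub1_bounds x Hx) as [Hlow Hup].
  replace (1 / x) with (N' / L) in Hlow, Hup by (unfold x; field; lra).
  unfold Mprime, Mapprox, Rpower in Hne. fold L N' x in Hne.
  destruct (floorR_lt_of_ne _ _ Hlow (not_eq_sym Hne)) as [Hk1 Hk2].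
  exists (floorR (1 / (exp x - 1))).
  replace (INR n * (1 / L) + (1 / L - 1 / 2)) with (N' / L - 1 / 2)
    by (unfold N'; rewrite S_INR; field; lra).
  lra.
Qed.

Lemma Un_cv_ratio_0 (u : nat -> nat) :
  (forall eps, 0 < eps <= 1 -> exists K, forall N, INR (u N) <= eps * INR N + K) ->
  Un_cv (fun N => INR (u N) / INR N) 0.
Proof.
  intros Hsub eps Heps.
  set (e := Rmin eps 1 / 2).
  assert (He : 0 < e <= 1 /\ e <= eps / 2)
    by (unfold e, Rmin; destruct (Rle_dec eps 1); lra).
  destruct (Hsub e ltac:(lra)) as [K HK].
  destruct (nat_floor (Rmax 0 (2 * K / eps))) as [k Hk]; [apply Rmax_l|].
  exists (S k). intros N HN. unfold R_dist.
  apply le_INR in HN. rewrite S_INR in HN.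
  assert (HN0 : 0 < INR N) by (pose proof (Rmax_l 0 (2 * K / eps)); lra).
  assert (HKN : K < eps / 2 * INR N).
  { pose proof (Rmax_r 0 (2 * K / eps)).
    apply (Rmult_lt_reg_r (2 / eps)); [apply Rdiv_lt_0_compat; lra|].
    replace (eps / 2 * INR N * (2 / eps)) with (INR N) by (field; lra).
    replace (K * (2 / eps)) with (2 * K / eps) by (field; lra). lra. }
  specialize (HK N). pose proof (pos_INR (u N)).
  assert (e * INR N <= eps / 2 * INR N) by (apply Rmult_le_compat_r; lra).
  rewrite Rminus_0_r, Rabs_right.
  - apply (Rmult_lt_reg_r (INR N)); [exact HN0|].
    replace (INR (u N) / INR N * INR N) with (INR (u N)) by (field; lra). lra.
  - apply Rle_ge, Rdiv_le_0_compat; lra.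
Qed.

Lemma countA_eq_count theta N : countA theta N =
  count (fun n => if Z.eq_dec (Mprime theta (S n)) (Mapprox theta (S n)) then false else true) N.
Proof.
  induction N as [|N IH]; [reflexivity|].
  unfold count in *. simpl. rewrite IH. destruct (Z.eq_dec _ _); reflexivity.
Qed.

Theorem theorem3 (theta : R) (Htheta : 1 < theta) :
  Un_cv (fun N : nat => INR (countA theta N) / INR N) 0.
Proof.
  apply Un_cv_ratio_0. intros eps Heps.
  set (beta := 1 / ln theta).
  destruct (count_below_integer beta (beta - 1 / 2) eps Heps) as [eta [Heta [C HC]]].
  destruct (Mprime_ne_Mapprox_below_integer theta eta Htheta Heta) as [n1 Hn1].
  set (Q := fun n => if Z.eq_dec (Mprime theta (S n)) (Mapprox theta (S n)) then false else true).
  exists (INR n1 + INR C). intros N.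
  rewrite countA_eq_count. fold Q.
  assert (HQ : forall n, (Q n && (n1 <=? n))%bool = true -> below_integer beta (beta - 1 / 2) eta n).
  { intros n Hn. apply andb_prop in Hn as [HQn Hn]. apply Nat.leb_le in Hn.
    apply Hn1; [exact Hn|]. unfold Q in HQn. destruct (Z.eq_dec _ _); congruence. }
  pose proof (le_INR _ _ (count_le_split Q n1 N)) as Hsplit.
  rewrite plus_INR in Hsplit.
  specialize (HC _ HQ N). lra.
Qed.
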